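(* Let $K,L,T\ge 2$, $1\le r\le T$ and $1\le s\le\min(T,K+r)$ be integers, and let $\mathrm{DOG}_{rs}(K,L,T)$ be the integer vectors $\boldsymbol{\alpha}^{(p)}=(0,1,\dots,K-1)$, $\boldsymbol{\alpha}^{(s)}=K+\mathrm{GAP}(T,K+r,r)$, $\boldsymbol{\beta}^{(p)}=(K+r)\cdot(0,1,\dots,L-1)$, $\boldsymbol{\beta}^{(s)}=(K+r)(L-1)+K+\mathrm{GAP}(T,K+r,s)$. Then $(\boldsymbol{\alpha}^{(p)},\boldsymbol{\alpha}^{(s)},\boldsymbol{\beta}^{(p)},\boldsymbol{\beta}^{(s)})$ is a private and decodable degree table for parameters $K,L,T$ with $N=|\mathcal{TL}\cup\mathcal{TR}\cup\mathcal{BL}\cup\mathcal{BR}|$ unique entries.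
   Context: $\mathrm{GAP}(\ell,x,r)\in\mathbb{Z}^\ell$ is the vector of the first $\ell$ terms of $(0,1,\dots,r-1,\;x,\dots,x+r-1,\;2x,\dots,2x+r-1,\dots)$; adding a scalar to a vector adds it entrywise. For integer vectors $\boldsymbol{\alpha}^{(p)}\in\mathbb{Z}^K,\boldsymbol{\alpha}^{(s)}\in\mathbb{Z}^T,\boldsymbol{\beta}^{(p)}\in\mathbb{Z}^L,\boldsymbol{\beta}^{(s)}\in\mathbb{Z}^T$, with $\{\mathbf v\}$ the set of entries of $\mathbf v$ and integer sumsets $\mathcal A+\mathcal B=\{a+b\}$, let $\mathcal{TL}=\{\boldsymbol{\alpha}^{(p)}\}+\{\boldsymbol{\beta}^{(p)}\}$, $\mathcal{TR}=\{\boldsymbol{\alpha}^{(p)}\}+\{\boldsymbol{\beta}^{(s)}\}$, $\mathcal{BL}=\{\boldsymbol{\alpha}^{(s)}\}+\{\boldsymbol{\beta}^{(p)}\}$, $\mathcal{BR}=\{\boldsymbol{\alpha}^{(s)}\}+\{\boldsymbol{\beta}^{(s)}\}$. The tuple is a private and decodable degree table for $K,L,T$ with $N$ unique entries if: (I) $|\mathcal{TL}\cup\mathcal{TR}\cup\mathcal{BL}\cup\mathcal{BR}|=N$; (II) $|\mathcal{TL}|=KL$; (III) $\mathcal{TL}\cap\mathcal{TR}=\mathcal{TL}\cap\mathcal{BL}=\mathcal{TL}\cap\mathcal{BR}=\emptyset$; (IV) the concatenation $\boldsymbol{\alpha}^{(p)}\|\boldsymbol{\alpha}^{(s)}$ has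 $K+T$ distinct entries and $\boldsymbol{\beta}^{(p)}\|\boldsymbol{\beta}^{(s)}$ has $L+T$ distinct entries. *)

(* Integer vectors are represented as sequences of int;
   the set {v} of entries of v is the sequence v read as a set. *)
From mathcomp Require Import all_boot all_order all_algebra.
Set Implicit Arguments. Unset Strict Implicit. Unset Printing Implicit Defensive.
Import Order.TTheory GRing.Theory Num.Theory.
Local Open Scope ring_scope.

(* GAP(l, x, r): first l terms of 0,..,r-1, x,..,x+r-1, 2x,..,2x+r-1, ...
   i.e. the i-th term (i from 0) is (i div r) * x + (i mod r). *)
Definition GAP (l : nat) (x : int) (r : nat) : seq int :=
  [seq ((i %/ r)%N%:Z * x + (i %% r)%N%:Z) | i <- iota 0 l].

Definition vadd (c : int) (v : seq int) : seq int := [seq c + a | a <- v].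

Definition sumset (A B : seq int) : seq int :=
  undup [seq a + b | a <- A, b <- B].

Definition card_set (A : seq int) : nat := size (undup A).

Definition disjoint_sets (A B : seq int) : bool := ~~ has (fun a => a \in B) A.

Definition TL (ap as_ bp bs : seq int) := sumset ap bp.
Definition TR (ap as_ bp bs : seq int) := sumset ap bs.
Definition BL (ap as_ bp bs : seq int) := sumset as_ bp.
Definition BR (ap as_ bp bs : seq int) := sumset as_ bs.

Definition all_entries (ap as_ bp bs : seq int) : seq int :=
  TL ap as_ bp bs ++ TR ap as_ bp bs ++ BL ap as_ bp bs ++ BR ap as_ bp bs.

Definition private_decodable_degree_table (K L T N : nat)
    (ap as_ bp bs : seq int) : Prop :=
  [/\ [/\ size ap = K, size as_ = T, size bp = L & size bs = T],
      card_set (all_entries ap as_ bp bs) = N,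
      card_set (TL ap as_ bp bs) = (K * L)%N,
      [/\ disjoint_sets (TL ap as_ bp bs) (TR ap as_ bp bs),
                      disjoint_sets (TL ap as_ bp bs) (BL ap as_ bp bs) &
                      disjoint_sets (TL ap as_ bp bs) (BR ap as_ bp bs)] &
      uniq (ap ++ as_) /\ uniq (bp ++ bs)].

Definition DOG_ap (K : nat) : seq int := [seq i%:Z | i <- iota 0 K].
Definition DOG_as (K T r : nat) : seq int :=
  vadd K%:Z (GAP T (K + r)%N%:Z r).
Definition DOG_bp (K L r : nat) : seq int :=
  [seq (K + r)%N%:Z * i%:Z | i <- iota 0 L].
Definition DOG_bs (K L T r s : nat) : seq int :=
  vadd ((K + r)%N%:Z * (L%:Z - 1) + K%:Z) (GAP T (K + r)%N%:Z s).

From mathcomp Require Import all_boot all_order all_algebra ring zify.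
Set Implicit Arguments. Unset Strict Implicit. Unset Printing Implicit Defensive.
Import Order.TTheory GRing.Theory Num.Theory.
Local Open Scope ring_scope.

(* Put d := K + r.  The entries of TL are the numbers i + d j with i < K and
   j < L, i.e. base-d numbers whose last digit is below K; reading off the two
   digits gives |TL| = KL.  An entry K + (q d + m) + d j of BL (m < r) has last
   digit K + m >= K, so it misses TL.  Every entry of TR and BR is at least
   d (L - 1) + K, which exceeds every entry of TL.  The same size comparison
   separates the two halves of each concatenation in (IV), and GAP(l, x, r) is
   duplicate-free as soon as r <= x, again by reading off base-x digits. *)

Lemma modz_addMl (q m d : int) : 0 <= m < d -> ((q * d + m) %% d)%Z = m.
Proof. by move=> m_bounds; rewrite modzMDl modz_small. Qed.

Lemma mem_GAP l (x : int) r y : (0 < r)%N -> y \in GAP l x r ->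
  exists q m : nat, (m < r)%N /\ y = q%:Z * x + m%:Z.
Proof.
by move=> r_gt0 /mapP[i _ ->]; exists (i %/ r)%N, (i %% r)%N; rewrite ltn_pmod.
Qed.

Lemma uniq_GAP l (x : int) r : (0 < r)%N -> r%:Z <= x -> uniq (GAP l x r).
Proof.
move=> r_gt0 r_le_x; rewrite map_inj_in_uniq ?iota_uniq // => i j _ _ eq_ij.
have mod_lt_x k : 0 <= (k %% r)%N%:Z < x.
  by apply/andP; split=> //; apply: lt_le_trans r_le_x; rewrite ltz_nat ltn_pmod.
have eq_mod : (i %% r)%N = (j %% r)%N.
  by move/(congr1 (modz^~ x)): eq_ij; rewrite !modz_addMl // => -[].
have x_neq0 : x != 0 by rewrite gt_eqF // (lt_le_trans _ r_le_x) ?ltz_nat.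
move: eq_ij; rewrite eq_mod => /addIr /(mulIf x_neq0) [eq_div].
by rewrite (divn_eq i r) (divn_eq j r) eq_div eq_mod.
Qed.

Lemma uniq_vadd c v : uniq v -> uniq (vadd c v).
Proof. by move=> uniq_v; rewrite map_inj_uniq // => a b /addrI. Qed.

Lemma sumsetP A B x :
  reflect (exists2 a, a \in A & exists2 b, b \in B & x = a + b) (x \in sumset A B).
Proof.
rewrite mem_undup; apply: (iffP allpairsP) => [[[a b] [/= Aa Bb ->]]|[a Aa [b Bb ->]]].
  by exists a => //; exists b.
by exists (a, b).
Qed.

Lemma sumset_ge A B (ca cb : int) :
  {in A, forall a, ca <= a} -> {in B, forall b, cb <= b} ->
  {in sumset A B, forall x, ca + cb <= x}.
Proof. by move=> geA geB x /sumsetP[a /geA ? [b /geB ? ->]]; apply: lerD. Qed.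

Lemma card_sumset A B : uniq A -> uniq B ->
  (forall a a' b b', a \in A -> a' \in A -> b \in B -> b' \in B ->
     a + b = a' + b' -> a = a') ->
  card_set (sumset A B) = (size A * size B)%N.
Proof.
move=> uniqA uniqB inj_add; rewrite /card_set /sumset undup_id ?undup_uniq //.
rewrite undup_id ?size_allpairs //.
apply: allpairs_uniq => // -[a b] [a' b'] /allpairsP[[? ?] [/= Aa Bb [-> ->]]].
move=> /allpairsP[[? ?] [/= Aa' Bb' [-> ->]]] /= eq_sum.
have eq_a := inj_add _ _ _ _ Aa Aa' Bb Bb' eq_sum.
by move: eq_sum; rewrite eq_a => /addrI ->.
Qed.

Lemma disjoint_sets_sep (P : pred int) A B :
  {in A, forall a, P a} -> {in B, forall b, ~~ P b} -> disjoint_sets A B.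
Proof.
by move=> PA nPB; apply/hasPn => a /PA Pa; apply/negP => /nPB; rewrite Pa.
Qed.

Section DOG.

Variables K L T r s : nat.
Hypotheses (K_gt0 : (0 < K)%N) (r_gt0 : (0 < r)%N) (s_gt0 : (0 < s)%N)
  (s_le_d : (s <= K + r)%N).

Local Notation d := (K + r)%N%:Z.
Local Notation c := (d * (L%:Z - 1) + K%:Z).
Local Notation ap := (DOG_ap K).
Local Notation as_ := (DOG_as K T r).
Local Notation bp := (DOG_bp K L r).
Local Notation bs := (DOG_bs K L T r s).

Lemma DOG_modulus_neq0 : d != 0.
Proof. by rewrite eqz_nat -lt0n addn_gt0 r_gt0 orbT. Qed.

Lemma size_DOG : [/\ size ap = K, size as_ = T, size bp = L & size bs = T].
Proof. by rewrite !size_map !size_iota. Qed.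

Lemma mem_DOG_ap y : y \in ap -> exists2 i : nat, (i < K)%N & y = i%:Z.
Proof. by move=> /mapP[i]; rewrite mem_iota => /andP[_ lt_iK] ->; exists i. Qed.

Lemma mem_DOG_bp y : y \in bp -> exists2 j : nat, (j < L)%N & y = d * j%:Z.
Proof. by move=> /mapP[j]; rewrite mem_iota => /andP[_ lt_jL] ->; exists j. Qed.

Lemma mem_DOG_as y : y \in as_ ->
  exists q m : nat, (m < r)%N /\ y = K%:Z + (q%:Z * d + m%:Z).
Proof. by move=> /mapP[z /(mem_GAP r_gt0)[q [m [lt_mr ->]]] ->]; exists q, m. Qed.

Lemma DOG_ap_ge0 : {in ap, forall a, 0 <= a}.
Proof. by move=> a /mem_DOG_ap[i _ ->]. Qed.

Lemma DOG_ap_lt : {in ap, forall a, a < K%:Z}.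
Proof. by move=> a /mem_DOG_ap[i lt_iK ->]; rewrite ltz_nat. Qed.

Lemma DOG_bp_le : {in bp, forall b, b <= d * (L%:Z - 1)}.
Proof. by move=> b /mem_DOG_bp[j lt_jL ->]; rewrite ler_wpM2l //; lia. Qed.

Lemma DOG_as_ge : {in as_, forall a, K%:Z <= a}.
Proof.
by move=> a /mem_DOG_as[q [m [_ ->]]]; rewrite lerDl addr_ge0 // mulr_ge0.
Qed.

Lemma DOG_bs_ge : {in bs, forall b, c <= b}.
Proof.
move=> b /mapP[z /(mem_GAP s_gt0)[q [m [_ ->]]] ->].
by rewrite lerDl addr_ge0 // mulr_ge0.
Qed.

Lemma modz_DOG_ap_bp a b : a \in ap -> b \in bp -> ((a + b) %% d)%Z = a.
Proof.
move=> /mem_DOG_ap[i lt_iK ->] /mem_DOG_bp[j _ ->].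
by rewrite addrC mulrC modz_addMl //; lia.
Qed.

Lemma modz_DOG_as_bp a b : a \in as_ -> b \in bp -> K%:Z <= ((a + b) %% d)%Z.
Proof.
move=> /mem_DOG_as[q [m [lt_mr ->]]] /mem_DOG_bp[j _ ->].
have -> : K%:Z + (q%:Z * d + m%:Z) + d * j%:Z = (q%:Z + j%:Z) * d + (K + m)%N%:Z.
  by rewrite PoszD; ring.
by rewrite modz_addMl; lia.
Qed.

Lemma card_DOG_TL : card_set (TL ap as_ bp bs) = (K * L)%N.
Proof.
have [size_ap _ size_bp _] := size_DOG.
rewrite /TL card_sumset ?size_ap ?size_bp //.
- by rewrite map_inj_uniq ?iota_uniq // => i j [].
- by rewrite map_inj_uniq ?iota_uniq // => i j /(mulfI DOG_modulus_neq0) [].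
move=> a a' b b' ap_a ap_a' bp_b bp_b' /(congr1 (modz^~ d)).
by rewrite !modz_DOG_ap_bp.
Qed.

Lemma DOG_TL_lt : {in sumset ap bp, forall x, x < c}.
Proof.
move=> x /sumsetP[a /DOG_ap_lt lt_aK [b /DOG_bp_le le_b ->]].
by rewrite addrC ler_ltD.
Qed.

Lemma DOG_TL_disjoint :
  [/\ disjoint_sets (TL ap as_ bp bs) (TR ap as_ bp bs),
      disjoint_sets (TL ap as_ bp bs) (BL ap as_ bp bs) &
      disjoint_sets (TL ap as_ bp bs) (BR ap as_ bp bs)].
Proof.
have as_ge0 a : a \in as_ -> 0 <= a.
  by move=> /DOG_as_ge; apply: le_trans.
split.
- apply: (disjoint_sets_sep DOG_TL_lt) => x /(sumset_ge DOG_ap_ge0 DOG_bs_ge).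
  by rewrite add0r -leNgt.
- apply: (@disjoint_sets_sep (fun x => (x %% d)%Z < K%:Z)).
    by move=> x /sumsetP[a ap_a [b bp_b ->]]; rewrite modz_DOG_ap_bp // DOG_ap_lt.
  by move=> x /sumsetP[a as_a [b bp_b ->]]; rewrite -leNgt modz_DOG_as_bp.
- apply: (disjoint_sets_sep DOG_TL_lt) => x /(sumset_ge as_ge0 DOG_bs_ge).
  by rewrite add0r -leNgt.
Qed.

Lemma uniq_DOG : uniq (ap ++ as_) /\ uniq (bp ++ bs).
Proof.
split; rewrite cat_uniq; apply/and3P; split.
- by rewrite map_inj_uniq ?iota_uniq // => i j [].
- apply: (@disjoint_sets_sep (fun x => K%:Z <= x)); first exact: DOG_as_ge.
  by move=> a /DOG_ap_lt; rewrite -ltNge.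
- by apply/uniq_vadd/uniq_GAP; rewrite // lez_nat leq_addl.
- by rewrite map_inj_uniq ?iota_uniq // => i j /(mulfI DOG_modulus_neq0) [].
- apply: (@disjoint_sets_sep (fun x => c <= x)); first exact: DOG_bs_ge.
  move=> b /DOG_bp_le le_b; rewrite -ltNge (le_lt_trans le_b) //.
  by rewrite ltrDl ltz_nat.
- by apply/uniq_vadd/uniq_GAP; rewrite // lez_nat.
Qed.

End DOG.

Theorem lemma3 (K L T r s : nat) :
  (2 <= K)%N -> (2 <= L)%N -> (2 <= T)%N ->
  (1 <= r <= T)%N -> (1 <= s <= minn T (K + r))%N ->
  private_decodable_degree_table K L T
    (card_set (all_entries (DOG_ap K) (DOG_as K T r) (DOG_bp K L r) (DOG_bs K L T r s)))
    (DOG_ap K) (DOG_as K T r) (DOG_bp K L r) (DOG_bs K L T r s).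
Proof.
move=> K_ge2 _ _ /andP[r_gt0 _] /andP[s_gt0]; rewrite leq_min => /andP[_ s_le_d].
have K_gt0 : (0 < K)%N by apply: leq_trans K_ge2.
split=> //.
- exact: size_DOG.
- exact: card_DOG_TL.
- exact: DOG_TL_disjoint.
- exact: uniq_DOG.
Qed.
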